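(* Let $n\ge 2$. With respect to the basis $(X,Y_1,\dots,Y_{n-1},Z_1,\dots,Z_{n-1},W)$ of $\mathfrak{ch}^n$ (block decomposition of sizes $1,\ 2n-2,\ 1$), the automorphism group of the Lie algebra $\mathfrak{ch}^n$ is $$\mathrm{Aut}(\mathfrak{ch}^n)=\left\{\begin{pmatrix}1&0&0\\ u&M&0\\ a&v^T&\lambda\end{pmatrix}\ :\ M\in GL(2n-2,\mathbb R),\ M^TJ_{n-1}M=\lambda J_{n-1},\ v\in\mathbb R^{2n-2},\ a,\lambda\in\mathbb R,\ \lambda\neq 0,\ u=\tfrac{1}{2\lambda}MJ_{n-1}v\right\}.$$
   Context: $\mathfrak{ch}^n$ is the $2n$-dimensional real Lie algebra with basis $X,Y_1,\dots,Y_{n-1},Z_1,\dots,Z_{n-1},W$ whose only nonzero brackets (up to antisymmetry) are $[X,Y_i]=\tfrac12 Y_i$, $[X,Z_i]=\tfrac12 Z_i$, $[X,W]=W$, $[Z_j,Y_i]=\delta_{ij}W$ for $i,j\in\{1,\dots,n-1\}$ (it is the Lie algebra of the solvable group $\mathbb R\ltimes H_{2n-1}$ acting simply transitively on complex hyperbolic space $\mathbb{CH}^n$). Linear maps are represented by matrices in this ordered basis (the $k$-th column is the coordinate vector of the image of the $k$-th basis vector). $J_{m}=\begin{pmatrix}0&I_m\\-I_m&0\end{pmatrix}$ with $I_m$ the $m\times m$ identity matrix. *)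

From HB Require Import structures.
From mathcomp Require Import all_boot all_order all_algebra.
From mathcomp Require Import reals.
Set Implicit Arguments. Unset Strict Implicit. Unset Printing Implicit Defensive.
Import Order.TTheory GRing.Theory Num.Theory.
Local Open Scope ring_scope.

(* ch^n with m = n-1: dimension 1 + (m + m) + 1 = 2n.
   Coordinates (column vectors) in the ordered basis
   X (index 0), Y_1..Y_m (indices 1..m), Z_1..Z_m (indices m+1..2m), W (index 2m+1). *)
Definition chdim (m : nat) : nat := (1 + (m + m)) + 1.

Section CH.
Variables (R : realType) (m : nat).
Local Notation N := (chdim m).

Definition isY (k : nat) : bool := (1 <= k <= m)%N.
Definition isZ (k : nat) : bool := (m + 1 <= k <= m + m)%N.
Definition isW (k : nat) : bool := (k == m + m + 1)%N.

Definition ch_e (k : 'I_N) : 'cV[R]_N := delta_mx k 0.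
Definition ch_W : 'I_N := inord (m + m + 1).

(* bracket of basis vectors, from the structure constants
   [X,Y_i]=1/2 Y_i, [X,Z_i]=1/2 Z_i, [X,W]=W, [Z_j,Y_i]=delta_ij W,
   extended by antisymmetry, all other brackets zero *)
Definition ch_bb (i j : 'I_N) : 'cV[R]_N :=
  if (i == 0 :> nat) && (isY j || isZ j) then (1/2) *: ch_e j
  else if (i == 0 :> nat) && isW j then ch_e j
  else if (j == 0 :> nat) && (isY i || isZ i) then - ((1/2) *: ch_e i)
  else if (j == 0 :> nat) && isW i then - ch_e i
  else if [&& isZ i, isY j & (nat_of_ord i == (nat_of_ord j + m)%N)] then ch_e ch_W
  else if [&& isY i, isZ j & (nat_of_ord j == (nat_of_ord i + m)%N)] then - ch_e ch_W
  else 0.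

Definition ch_br (p q : 'cV[R]_N) : 'cV[R]_N :=
  \sum_(i < N) \sum_(j < N) (p i 0 * q j 0) *: ch_bb i j.

(* A (k-th column = coordinates of image of k-th basis vector) is a Lie
   algebra automorphism *)
Definition ch_aut (A : 'M[R]_N) : Prop :=
  A \in unitmx /\ forall p q : 'cV[R]_N, A *m ch_br p q = ch_br (A *m p) (A *m q).

Definition Jmx : 'M[R]_(m + m) := block_mx 0 1%:M (- 1%:M) 0.

Definition ch_block (u : 'cV[R]_(m + m)) (M : 'M[R]_(m + m))
    (a : R) (v : 'cV[R]_(m + m)) (lam : R) : 'M[R]_N :=
  block_mx (block_mx (1%:M : 'M[R]_1) 0 u M) 0
           (row_mx (a%:M : 'M[R]_1) v^T) (lam%:M : 'M[R]_1).
End CH.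

From HB Require Import structures.
From mathcomp Require Import all_boot all_order all_algebra.
From mathcomp Require Import reals.
From mathcomp Require Import zify ring lra.
Import Order.TTheory GRing.Theory Num.Theory.
Local Open Scope ring_scope.
Set Implicit Arguments. Unset Strict Implicit. Unset Printing Implicit Defensive.

(* Split ch^n = R X (+) R^(2m) (+) R W and write a vector as chv x h w.
   1. The bracket given by the structure constants has the closed form
        [chv x1 h1 w1, chv x2 h2 w2]
          = chv 0 (1/2 (x1 h2 - x2 h1)) (x1 w2 - x2 w1 - omega h1 h2),
      where omega h1 h2 = h1^T J h2 is the standard symplectic form: both
      sides are bilinear and they agree on pairs of basis vectors.
   2. Every matrix is a 3 x 3 block matrix chmx al r be u M c a s ga, whose
      action on block vectors is explicit.
   3. Testing the automorphism identity on the pairs (X, W), (X, h) and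
      (h, h') forces al = 1, r = 0, be = 0, c = 0, M^T J M = ga J and
      u^T J M = s / 2; invertibility forces ga <> 0.
   4. A conformally symplectic M (M^T J M = lam J, lam <> 0) is invertible and
      the relation u^T J M = s / 2 determines u = (2 lam)^-1 M J s^T.
   5. Conversely, such block matrices preserve the closed-form bracket. *)

Lemma mx0_entry (R : pzRingType) p q (i : 'I_p) (j : 'I_q) :
  (0 : 'M[R]_(p, q)) i j = 0.
Proof. by rewrite mxE. Qed.

Lemma mx_scale_entry (R : pzRingType) p q c (B : 'M[R]_(p, q)) i j :
  (c *: B) i j = c * B i j.
Proof. by rewrite mxE. Qed.

Lemma rV_mul_delta (R : pzRingType) n (s : 'rV[R]_n) k :
  (s *m delta_mx k (0 : 'I_1)) 0 0 = s 0 k.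
Proof. by rewrite -colE mxE. Qed.

Lemma form_delta (R : pzRingType) n (B : 'M[R]_n) i j :
  ((delta_mx i (0 : 'I_1))^T *m B *m delta_mx j (0 : 'I_1)) 0 0 = B i j.
Proof. by rewrite trmx_delta -rowE -colE !mxE. Qed.

Lemma scalar_mx0 (R : pzRingType) n : (0 : R)%:M = 0 :> 'M[R]_n.
Proof. by apply/matrixP => i j; rewrite !mxE mul0rn. Qed.

Lemma delta_mx11 (R : pzRingType) : delta_mx 0 0 = 1%:M :> 'M[R]_1.
Proof. by apply/matrixP => i j; rewrite !ord1 !mxE. Qed.

(* A bilinear map on column vectors is determined by its values on pairs of
   unit vectors; this reduces the bracket to its structure constants. *)
Section BilinearExpansion.
Variables (R : comNzRingType) (n : nat) (V : lmodType R).
Variable f : 'cV[R]_n -> 'cV[R]_n -> V.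
Hypotheses (fDl : forall p1 p2 q, f (p1 + p2) q = f p1 q + f p2 q)
           (fZl : forall c p q, f (c *: p) q = c *: f p q)
           (fDr : forall p q1 q2, f p (q1 + q2) = f p q1 + f p q2)
           (fZr : forall c p q, f p (c *: q) = c *: f p q).

Lemma col_sum_delta (p : 'cV[R]_n) : p = \sum_i p i 0 *: delta_mx i 0.
Proof. by rewrite {1}(matrix_sum_delta p); apply: eq_bigr => i _; rewrite big_ord1. Qed.

Lemma bilinear_expand p q :
  f p q = \sum_i \sum_j (p i 0 * q j 0) *: f (delta_mx i 0) (delta_mx j 0).
Proof.
have f0l q' : f 0 q' = 0 by rewrite -(scale0r 0) fZl scale0r.
have f0r p' : f p' 0 = 0 by rewrite -(scale0r 0) fZr scale0r.
rewrite {1}(col_sum_delta p) (big_morph (f^~ q) (fun x y => fDl x y q) (f0l q)).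
apply: eq_bigr => i _; rewrite fZl {1}(col_sum_delta q).
rewrite (big_morph (f _) (fDr _) (f0r _)) scaler_sumr.
by apply: eq_bigr => j _; rewrite fZr scalerA.
Qed.
End BilinearExpansion.

Section Coordinates.
Variables (R : realType) (m : nat).
Local Notation N := (chdim m).
Local Notation J := (Jmx R m).

Definition iX : 'I_N := lshift 1 (lshift (m + m) ord0).
Definition iY (k : 'I_m) : 'I_N := lshift 1 (rshift 1 (lshift m k)).
Definition iZ (k : 'I_m) : 'I_N := lshift 1 (rshift 1 (rshift m k)).
Definition iW : 'I_N := rshift (1 + (m + m)) ord0.

Variant ch_index_spec : 'I_N -> Type :=
| IndexX : ch_index_spec iX
| IndexY k : ch_index_spec (iY k)
| IndexZ k : ch_index_spec (iZ k)
| IndexW : ch_index_spec iW.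

Lemma ch_indexP (i : 'I_N) : ch_index_spec i.
Proof.
rewrite -[i]splitK; case: (split i) => [j|k] /=; last by rewrite ord1; exact: IndexW.
rewrite -[j]splitK; case: (split j) => [j0|h] /=; first by rewrite ord1; exact: IndexX.
by rewrite -[h]splitK; case: (split h) => k; [exact: IndexY | exact: IndexZ].
Qed.

Lemma ch_W_iW : ch_W m = iW.
Proof. by apply: val_inj; rewrite /= inordK // /chdim; lia. Qed.

Ltac eval_bb := rewrite /ch_bb ch_W_iW /isY /isZ /isW /=;
  repeat (case: ifP => //; intros); try (exfalso; lia).

(* Block coordinates: a vector is x X + h + w W with h in R^(2m). *)
Definition chv (x : R) (h : 'cV[R]_(m + m)) (w : R) : 'cV[R]_N :=
  col_mx (col_mx x%:M h) w%:M.
Definition chx (p : 'cV[R]_N) : R := usubmx (@usubmx R (1 + (m + m)) 1 1 p) 0 0.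
Definition chh (p : 'cV[R]_N) : 'cV[R]_(m + m) := dsubmx (@usubmx R (1 + (m + m)) 1 1 p).
Definition chw (p : 'cV[R]_N) : R := @dsubmx R (1 + (m + m)) 1 1 p 0 0.

Lemma chvK (p : 'cV[R]_N) : chv (chx p) (chh p) (chw p) = p.
Proof. by rewrite /chv -!mx11_scalar !vsubmxK. Qed.

Lemma chx_chv x h w : chx (chv x h w) = x.
Proof. by rewrite /chx /chv !col_mxKu mxE. Qed.
Lemma chh_chv x h w : chh (chv x h w) = h.
Proof. by rewrite /chh /chv col_mxKu col_mxKd. Qed.
Lemma chw_chv x h w : chw (chv x h w) = w.
Proof. by rewrite /chw /chv col_mxKd mxE. Qed.

Lemma chv_inj x h w x' h' w' :
  chv x h w = chv x' h' w' -> [/\ x = x', h = h' & w = w'].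
Proof.
by move=> e; split; [rewrite -(chx_chv x h w) e chx_chv
  | rewrite -(chh_chv x h w) e chh_chv | rewrite -(chw_chv x h w) e chw_chv].
Qed.

Lemma chvD x h w x' h' w' : chv x h w + chv x' h' w' = chv (x + x') (h + h') (w + w').
Proof. by rewrite /chv !add_col_mx !raddfD. Qed.
Lemma chvZ c x h w : c *: chv x h w = chv (c * x) (c *: h) (c * w).
Proof. by rewrite /chv !scale_col_mx !scale_scalar_mx. Qed.
Lemma chvN x h w : - chv x h w = chv (- x) (- h) (- w).
Proof. by rewrite -scaleN1r chvZ !mulN1r scaleN1r. Qed.
Lemma chv0 : chv 0 0 0 = 0.
Proof. by rewrite /chv !scalar_mx0 !col_mx0. Qed.

Lemma e_iX : ch_e R iX = chv 1 0 0.
Proof. by rewrite /ch_e /iX /chv !delta_mx_ushift delta_mx11 scalar_mx0. Qed.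
Lemma e_iY k : ch_e R (iY k) = chv 0 (delta_mx (lshift m k) 0) 0.
Proof. by rewrite /ch_e /chv !delta_mx_ushift delta_mx_dshift scalar_mx0 delta_mx_ushift. Qed.
Lemma e_iZ k : ch_e R (iZ k) = chv 0 (delta_mx (rshift m k) 0) 0.
Proof. by rewrite /ch_e /chv !delta_mx_ushift delta_mx_dshift scalar_mx0 delta_mx_dshift. Qed.
Lemma e_iW : ch_e R iW = chv 0 0 1.
Proof. by rewrite /ch_e /chv delta_mx_dshift delta_mx11 scalar_mx0 col_mx0. Qed.

Definition omega (h1 h2 : 'cV[R]_(m + m)) : R := (h1^T *m J *m h2) 0 0.

Lemma omega_delta i j : omega (delta_mx i 0) (delta_mx j 0) = J i j.
Proof. exact: form_delta. Qed.

Lemma omegaDl h1 h2 h : omega (h1 + h2) h = omega h1 h + omega h2 h.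
Proof. by rewrite /omega linearD /= !mulmxDl mxE. Qed.
Lemma omegaDr h h1 h2 : omega h (h1 + h2) = omega h h1 + omega h h2.
Proof. by rewrite /omega !mulmxDr mxE. Qed.
Lemma omegaZl c h1 h2 : omega (c *: h1) h2 = c * omega h1 h2.
Proof. by rewrite /omega linearZ /= -!scalemxAl mxE. Qed.
Lemma omegaZr c h1 h2 : omega h1 (c *: h2) = c * omega h1 h2.
Proof. by rewrite /omega -!scalemxAr mxE. Qed.
Lemma omega0l h : omega 0 h = 0.
Proof. by rewrite -(scale0r 0) omegaZl mul0r. Qed.
Lemma omega0r h : omega h 0 = 0.
Proof. by rewrite -(scale0r 0) omegaZr mul0r. Qed.

Lemma Jmx_ll k l : J (lshift m k) (lshift m l) = 0.
Proof. by rewrite /Jmx block_mxEul mxE. Qed.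
Lemma Jmx_lr k l : J (lshift m k) (rshift m l) = (k == l)%:R.
Proof. by rewrite /Jmx block_mxEur mxE. Qed.
Lemma Jmx_rl k l : J (rshift m k) (lshift m l) = - (k == l)%:R.
Proof. by rewrite /Jmx block_mxEdl !mxE. Qed.
Lemma Jmx_rr k l : J (rshift m k) (rshift m l) = 0.
Proof. by rewrite /Jmx block_mxEdr mxE. Qed.

Definition br_model (p q : 'cV[R]_N) : 'cV[R]_N :=
  chv 0 ((1/2) *: (chx p *: chh q - chx q *: chh p))
        (chx p * chw q - chx q * chw p - omega (chh p) (chh q)).

Lemma br_model_chv x1 h1 w1 x2 h2 w2 :
  br_model (chv x1 h1 w1) (chv x2 h2 w2) =
  chv 0 ((1/2) *: (x1 *: h2 - x2 *: h1)) (x1 * w2 - x2 * w1 - omega h1 h2).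
Proof. by rewrite /br_model !chx_chv !chh_chv !chw_chv. Qed.

Lemma br_modelDl p1 p2 q : br_model (p1 + p2) q = br_model p1 q + br_model p2 q.
Proof.
rewrite -[p1]chvK -[p2]chvK -[q]chvK chvD !br_model_chv chvD addr0 omegaDl.
congr chv; last by ring.
by apply/matrixP => i j; rewrite !mxE; ring.
Qed.
Lemma br_modelDr p q1 q2 : br_model p (q1 + q2) = br_model p q1 + br_model p q2.
Proof.
rewrite -[p]chvK -[q1]chvK -[q2]chvK chvD !br_model_chv chvD addr0 omegaDr.
congr chv; last by ring.
by apply/matrixP => i j; rewrite !mxE; ring.
Qed.
Lemma br_modelZl c p q : br_model (c *: p) q = c *: br_model p q.
Proof.
rewrite -[p]chvK -[q]chvK chvZ !br_model_chv chvZ mulr0 omegaZl.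
congr chv; last by ring.
by apply/matrixP => i j; rewrite !mxE; ring.
Qed.
Lemma br_modelZr c p q : br_model p (c *: q) = c *: br_model p q.
Proof.
rewrite -[p]chvK -[q]chvK chvZ !br_model_chv chvZ mulr0 omegaZr.
congr chv; last by ring.
by apply/matrixP => i j; rewrite !mxE; ring.
Qed.

Lemma br_model_basis i j : br_model (ch_e R i) (ch_e R j) = ch_bb R i j.
Proof.
case/ch_indexP: i => [|k|k|]; case/ch_indexP: j => [|l|l|];
  rewrite ?e_iX ?e_iY ?e_iZ ?e_iW br_model_chv.
all: rewrite ?omega_delta ?Jmx_ll ?Jmx_lr ?Jmx_rl ?Jmx_rr ?omega0l ?omega0r.
all: try (have hk := ltn_ord k); try (have hl := ltn_ord l).
all: try (case: (eqVneq k l) => [<-|kl]; rewrite ?eqxx ?(negbTE kl);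
  [|have kl' : (k : nat) != l := kl]).
all: eval_bb; rewrite ?e_iX ?e_iY ?e_iZ ?e_iW ?chvZ ?chvN -?chv0; congr chv.
all: rewrite ?scale0r ?scale1r ?subr0 ?sub0r ?scaler0 ?scalerN ?oppr0 //.
all: ring.
Qed.

Lemma ch_br_model p q : ch_br p q = br_model p q.
Proof.
rewrite (bilinear_expand br_modelDl br_modelZl br_modelDr br_modelZr).
by apply: eq_bigr => i _; apply: eq_bigr => j _; rewrite br_model_basis.
Qed.

Lemma ch_br_chv x1 h1 w1 x2 h2 w2 :
  ch_br (chv x1 h1 w1) (chv x2 h2 w2) =
  chv 0 ((1/2) *: (x1 *: h2 - x2 *: h1)) (x1 * w2 - x2 * w1 - omega h1 h2).
Proof. by rewrite ch_br_model br_model_chv. Qed.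

Lemma tr_Jmx : J^T = - J.
Proof.
by rewrite /Jmx tr_block_mx !trmx0 trmx1 linearN /= trmx1 opp_block_mx !oppr0 opprK.
Qed.

Lemma Jmx_sqr : J *m J = - 1%:M.
Proof.
rewrite /Jmx mulmx_block !mulmx0 !mul0mx !addr0 !add0r mulmx1 mulmxN mulmx1.
by rewrite [in RHS]scalar_mx_block opp_block_mx oppr0.
Qed.

Lemma omega_anti h1 h2 : omega h1 h2 = - omega h2 h1.
Proof.
have tr11 (B : 'M[R]_1) : B^T 0 0 = B 0 0 by rewrite mxE.
by rewrite /omega -tr11 !trmx_mul trmxK tr_Jmx mulmxA mulmxN mulNmx mxE.
Qed.

Lemma omega_self h : omega h h = 0.
Proof. by have := omega_anti h h; lra. Qed.

Lemma omega_mul (M : 'M[R]_(m + m)) h1 h2 :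
  omega (M *m h1) (M *m h2) = (h1^T *m (M^T *m J *m M) *m h2) 0 0.
Proof. by rewrite /omega trmx_mul !mulmxA. Qed.

Section ConformalSymplectic.
Variables (M : 'M[R]_(m + m)) (lam : R).
Hypothesis MJM : M^T *m J *m M = lam *: J.

Lemma omega_conf h1 h2 : omega (M *m h1) (M *m h2) = lam * omega h1 h2.
Proof. by rewrite omega_mul MJM -scalemxAr -scalemxAl mxE. Qed.

Lemma omega_conf_J v h : omega (M *m J *m v) (M *m h) = lam * (v^T *m h) 0 0.
Proof.
rewrite -mulmxA omega_mul MJM trmx_mul tr_Jmx mulmxN mulNmx -scalemxAr mulNmx.
by rewrite -scalemxAl -(mulmxA v^T) Jmx_sqr mulmxN mulmx1 mulNmx scalerN opprK mxE.
Qed.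

Hypothesis lam_neq0 : lam != 0.

Lemma MJ_inverse : (- lam^-1) *: (M^T *m J) *m (M *m J) = 1%:M.
Proof.
rewrite -scalemxAl mulmxA MJM -scalemxAl Jmx_sqr scalerN scaleNr scalerN opprK.
by rewrite scalerA mulVf ?scale1r.
Qed.

Lemma conf_unit : M \in unitmx.
Proof. by have [_] := mulmx1_unit MJ_inverse; rewrite unitmx_mul => /andP[]. Qed.

(* Since M^T J is invertible, u^T J M = s / 2 pins down u. *)
Lemma conf_translation (u : 'cV[R]_(m + m)) (s : 'rV[R]_(m + m)) :
  u^T *m J *m M = 2^-1 *: s -> u = (2 * lam)^-1 *: (M *m J *m s^T).
Proof.
move=> uJM; have P_inv : M^T *m J *m ((- lam^-1) *: (M *m J)) = 1%:M.
  by rewrite -scalemxAr scalemxAl MJ_inverse.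
have [P_unit _] := mulmx1_unit P_inv; apply: (can_inj (mulKmx P_unit)).
have := congr1 (@trmx R 1 (m + m)) uJM.
rewrite !trmx_mul trmxK tr_Jmx linearZ /= mulNmx mulmxN mulmxA => uT.
rewrite -scalemxAr !mulmxA MJM -!scalemxAl Jmx_sqr mulNmx mul1mx -[LHS]opprK uT.
by rewrite !scalerN scalerA; congr (- (_ *: _)); field.
Qed.
End ConformalSymplectic.
End Coordinates.

Section BlockMatrices.
Variables (R : realType) (m : nat).
Local Notation N := (chdim m).
Local Notation J := (Jmx R m).

Definition chmx (al : R) (r : 'rV[R]_(m + m)) (be : R) (u : 'cV[R]_(m + m))
    (M : 'M[R]_(m + m)) (c : 'cV[R]_(m + m)) (a : R) (s : 'rV[R]_(m + m)) (ga : R) :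
    'M[R]_N :=
  block_mx (block_mx al%:M r u M) (col_mx be%:M c) (row_mx a%:M s) ga%:M.

Lemma chmx_decomp (A : 'M[R]_N) :
  exists al r be u M c a s ga, A = chmx al r be u M c a s ga.
Proof.
pose B : 'M[R]_(1 + (m + m) + 1) := A.
rewrite -[A]/B -(submxK B) -(submxK (ulsubmx B)) -(vsubmxK (ursubmx B)).
rewrite -(hsubmxK (dlsubmx B)) [ulsubmx (ulsubmx B)]mx11_scalar.
rewrite [usubmx (ursubmx B)]mx11_scalar [lsubmx (dlsubmx B)]mx11_scalar.
by rewrite [drsubmx B]mx11_scalar; do 9 eexists.
Qed.

Lemma chmx_mul al r be u M c a s ga x h w :
  chmx al r be u M c a s ga *m chv x h w =
  chv (al * x + (r *m h) 0 0 + be * w) (x *: u + M *m h + w *: c)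
      (a * x + (s *m h) 0 0 + ga * w).
Proof.
rewrite /chmx /chv !mul_block_col mul_row_col !mul_mx_scalar scale_col_mx add_col_mx.
rewrite !scale_scalar_mx (mx11_scalar (r *m h)) (mx11_scalar (s *m h)) -!raddfD /= !mxE.
by congr (col_mx (col_mx _%:M _) _%:M); rewrite eqxx mulr1n; ring.
Qed.

Lemma ch_block_chmx u M a v lam : ch_block u M a v lam = chmx 1 0 0 u M 0 a v^T lam.
Proof. by rewrite /ch_block /chmx scalar_mx0 col_mx0. Qed.

Ltac zero_simpl := rewrite ?(mulr0, mul0r, mulr1, mul1r, addr0, add0r, subr0, sub0r,
  mulmx0, mul0mx, scale0r, scaler0, scale1r, omega0l, omega0r, oppr0, scalerN, mx0_entry).

(* Necessary conditions: the automorphism identity on (X, W), (X, h) and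
   (h, h') fixes the block shape; invertibility then excludes ga = 0. *)
Lemma aut_shape (m_gt0 : (0 < m)%N) al r be u M c a s ga :
  ch_aut (chmx al r be u M c a s ga) ->
  [/\ al = 1, r = 0, be = 0 & c = 0] /\
  [/\ ga != 0, M^T *m J *m M = ga *: J & u^T *m J *m M = 2^-1 *: s].
Proof.
case=> uA hom.
have := hom (chv 1 0 0) (chv 0 0 1); rewrite !(ch_br_chv, chmx_mul); zero_simpl.
case/chv_inj=> be0 _ ga_eq; subst be.
have hom_X h : (r *m h) 0 0 = 0 /\ (s *m h) 0 0 = 2 * (al * (s *m h) 0 0 - omega u (M *m h)).
  have := hom (chv 1 0 0) (chv 0 h 0); rewrite !(ch_br_chv, chmx_mul); zero_simpl.
  case/chv_inj; rewrite -!scalemxAr !mx_scale_entry => rh _ sh.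
  have rh0 : (r *m h) 0 0 = 0 by lra.
  by move: sh; rewrite rh0; split; lra.
have r0 : r = 0 by apply/rowP => k; rewrite mxE -rV_mul_delta; exact: (hom_X _).1.
subst r.
have hom_hh i j :
    (- J i j) *: c = 0 /\ ga * - J i j = - omega (M *m delta_mx i 0) (M *m delta_mx j 0).
  have := hom (chv 0 (delta_mx i 0) 0) (chv 0 (delta_mx j 0) 0).
  by rewrite !(ch_br_chv, chmx_mul); zero_simpl; rewrite omega_delta; case/chv_inj.
have c0 : c = 0.
  have [+ _] := hom_hh (lshift m (Ordinal m_gt0)) (rshift m (Ordinal m_gt0)).
  by rewrite Jmx_lr eqxx scaleN1r => /eqP; rewrite oppr_eq0 => /eqP.
subst c; have ga0 : ga != 0.
  apply: contraTneq uA => ga0; apply/negP => uA; subst ga.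
  have := mulKmx uA (chv 0 0 1); rewrite chmx_mul; zero_simpl; rewrite chv0 mulmx0.
  by rewrite -chv0 => /chv_inj [_ _ /eqP]; rewrite eq_sym oner_eq0.
have al1 : al = 1.
  by move: ga_eq; zero_simpl => ga_eq; apply: (mulIf ga0); rewrite mul1r -ga_eq.
subst al; split=> //; split=> //.
- apply/matrixP => i j; rewrite mx_scale_entry -[LHS]form_delta -omega_mul.
  by have [_] := hom_hh i j; rewrite mulrN => /oppr_inj.
- apply/rowP => k; rewrite mx_scale_entry -[LHS]rV_mul_delta -[s 0 k]rV_mul_delta.
  by have [_] := hom_X (delta_mx k 0); rewrite /omega mulmxA; lra.
Qed.

Lemma block_aut (M : 'M[R]_(m + m)) (v : 'cV[R]_(m + m)) a lam :
  M^T *m J *m M = lam *: J -> lam != 0 ->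
  ch_aut (chmx 1 0 0 ((2 * lam)^-1 *: (M *m J *m v)) M 0 a v^T lam).
Proof.
move=> MJM lam0; split.
  rewrite /chmx scalar_mx0 col_mx0 unitmxE !det_lblock !det_scalar1 mul1r unitfE.
  by rewrite mulf_neq0 // -unitfE -unitmxE (conf_unit MJM).
move=> p q; rewrite -[p]chvK -[q]chvK.
move: (chx p) (chh p) (chw p) (chx q) (chh q) (chw q) => x1 h1 w1 x2 h2 w2.
rewrite !(ch_br_chv, chmx_mul); zero_simpl; congr chv.
  rewrite -scalemxAr mulmxBr -!scalemxAr; congr (_ *: _).
  by rewrite !scalerDr !scalerA [x2 * x1]mulrC opprD addrACA subrr add0r.
rewrite !omegaDl !omegaDr !omegaZl !omegaZr omega_self (omega_anti (M *m h1)).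
rewrite !(omega_conf_J MJM) (omega_conf MJM) -scalemxAr mulmxBr -!scalemxAr !mxE.
by field.
Qed.
End BlockMatrices.

Unset Implicit Arguments.

Theorem lemma2p1 (R : realType) (n : nat) (hn : (2 <= n)%N)
    (A : 'M[R]_(chdim n.-1)) :
  ch_aut A <->
  exists (M : 'M[R]_(n.-1 + n.-1)) (v : 'cV[R]_(n.-1 + n.-1)) (a lam : R),
    [/\ M \in unitmx,
        M^T *m Jmx R n.-1 *m M = lam *: Jmx R n.-1,
        lam != 0 &
        A = ch_block (((2 * lam)^-1) *: (M *m Jmx R n.-1 *m v)) M a v lam].
Proof.
split=> [autA | [M [v [a [lam [_ MJM lam0 ->]]]]]]; last first.
  by rewrite ch_block_chmx; exact: block_aut.
have m_gt0 : (0 < n.-1)%N by lia.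
have [al [r [be [u [M [c [a [s [ga eA]]]]]]]]] := chmx_decomp A.
move: autA; rewrite eA => /(aut_shape m_gt0) [[-> -> -> ->] [ga0 MJM uJM]].
exists M, s^T, a, ga; split=> //; first exact: conf_unit MJM ga0.
by rewrite ch_block_chmx trmxK -(conf_translation MJM ga0 uJM).
Qed.
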